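(* Let $n\ge 1$. Let $H_1$ and $H_2$ be two edge-disjoint Hamilton cycles of $G_{n,2}$, and let $E_1$ and $E_2$ be two edge-disjoint directed Hamilton cycles of $Q_{2n}$ (each starting at the origin $\mathbf 0$). Then the four Hamilton cycles $f(E_1,H_1)$, $f(E_1,H_2)$, $f(E_2,H_1)$, $f(E_2,H_2)$ of $Q_{4n}$ are pairwise edge-disjoint.
   Context: The hypercube $Q_{2n}$ is realized as the graph whose vertices are the quaternary strings $q_1q_2\cdots q_n$ with $q_i\in\{0,1,2,3\}$, two strings being adjacent iff they differ in exactly one position and there by $\pm1 \pmod 4$ (this is $C_4\Box\cdots\Box C_4$, $n$ factors, which is isomorphic to the $2n$-dimensional hypercube). The origin is $\mathbf 0=00\cdots0$. For $k\ge1$, $G_{n,k}$ denotes the Cartesian product $C_{4^n}\Box\cdots\Box C_{4^n}$ ($k$ factors), with vertex set $(\mathbb Z/4^n\mathbb Z)^k$, two vertices adjacent iff they differ in exactly one coordinate and there by $\pm1 \pmod{4^n}$. A directed Hamilton cycle $E$ of $Q_{2n}$ starting at $\mathbf 0$ lists the vertices as $e_0=\mathbf 0,e_1,\dots,e_{4^n-1}$ with consecutive ones (and $e_{4^n-1},e_0$) adjacent; put $\pi_E(e_p)=p\in\mathbb Z/4^n\mathbb Z$. Identify $V(Q_{4n})$ with pairs $(u,w)$ of quaternary strings of length $n$ (the first $n$ digits and the last $n$ digits), so $Q_{4n}=Q_{2n}\Box Q_{2n}$. The map $\Phi_E(u,w)=(\pi_E(u),\pi_E(w))$ is a bijection $V(Q_{4n})\to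 V(G_{n,2})$ such that $\Phi_E^{-1}$ sends every edge of $G_{n,2}$ to an edge of $Q_{4n}$. For a Hamilton cycle $H$ of $G_{n,2}$, $f(E,H):=\Phi_E^{-1}(H)$, a Hamilton cycle of $Q_{4n}$. *)

From mathcomp Require Import all_boot.
Set Implicit Arguments. Unset Strict Implicit. Unset Printing Implicit Defensive.

(* Vertices of Q_{2n}: quaternary strings q_1..q_n, i.e. functions 'I_n -> 'I_4 *)
Definition qvert (n : nat) := {ffun 'I_n -> 'I_4}.

Definition cadj (m x y : nat) : bool := ((x + 1) %% m == y) || ((y + 1) %% m == x).

(* Adjacency in Q_{2n} = C_4 □ ... □ C_4 *)
Definition qadj (n : nat) (u v : qvert n) : bool :=
  [exists i : 'I_n, [forall j : 'I_n, (j != i) ==> (u j == v j)] && cadj 4 (u i) (v i)].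

Definition qorigin (n : nat) : qvert n := [ffun _ => ord0].

(* Vertices of G_{n,2} = C_{4^n} □ C_{4^n} *)
Definition gvert (n : nat) := ('I_(4 ^ n) * 'I_(4 ^ n))%type.

Definition gadj (n : nat) (a b : gvert n) : bool :=
  ((a.1 == b.1) && cadj (4 ^ n) a.2 b.2) || ((a.2 == b.2) && cadj (4 ^ n) a.1 b.1).

Definition ham_cycle (T : finType) (adj : rel T) (s : seq T) : Prop :=
  [/\ forall v : T, v \in s, uniq s & cycle adj s].

Definition dir_ham_cycle0 (n : nat) (E : seq (qvert n)) : Prop :=
  ham_cycle (@qadj n) E /\ nth (qorigin n) E 0 = qorigin n.

Definition cyc_edge (T : eqType) (s : seq T) (x y : T) : bool :=
  has (fun p : T * T => ((p.1 == x) && (p.2 == y)) || ((p.1 == y) && (p.2 == x)))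
      (zip s (rot 1 s)).

Definition edge_disjoint (T : eqType) (s t : seq T) : Prop :=
  forall x y : T, cyc_edge s x y -> ~~ cyc_edge t x y.

(* pi_E(e_p) = p; Phi_E(u,w) = (pi_E u, pi_E w) *)
Definition piE (n : nat) (E : seq (qvert n)) (v : qvert n) : nat := index v E.

(* Phi_E^{-1}(p, q) = (e_p, e_q), a vertex (u,w) of Q_{4n} = Q_{2n} □ Q_{2n} *)
Definition PhiE_inv (n : nat) (E : seq (qvert n)) (a : gvert n) : qvert n * qvert n :=
  (nth (qorigin n) E a.1, nth (qorigin n) E a.2).

Definition fEH (n : nat) (E : seq (qvert n)) (H : seq (gvert n)) : seq (qvert n * qvert n) :=
  map (PhiE_inv E) H.

From mathcomp Require Import all_boot.
From mathcomp Require Import zify.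

Set Implicit Arguments.
Unset Strict Implicit.
Unset Printing Implicit Defensive.

(* Two facts about Phi_E^{-1} drive the
   proof, for E a directed Hamilton cycle of Q_{2n}:
   - Phi_E^{-1} is injective, since E lists every vertex exactly once; hence it
     maps the edge-disjoint cycles H1, H2 to edge-disjoint cycles.  This covers
     the pairs f(E,H1), f(E,H2).
   - Phi_E^{-1} sends every edge of G_{n,2} to an "E-edge" of
     Q_{4n} = Q_{2n} [] Q_{2n}: the two ends agree in one coordinate and form an
     edge of E in the other (prod_edge (cyc_edge E)).  If E1, E2 share no edge
     and E2 has no loop (Q_{2n} is loopless), no pair is both an E1-edge and an
     E2-edge; this covers the four pairs f(E1,_), f(E2,_). *)

Section CyclicPairs.
Variable T : eqType.
Implicit Types (s : seq T) (e : rel T).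

Definition cyc_pairs s : seq (T * T) := zip s (rot 1 s).

Lemma cyc_edgeP s x y :
  reflect ((x, y) \in cyc_pairs s \/ (y, x) \in cyc_pairs s) (cyc_edge s x y).
Proof.
apply: (iffP hasP) => [[[a b] Hab /= /orP[] /andP[/eqP Ea /eqP Eb]] | []].
- by left; rewrite -Ea -Eb.
- by right; rewrite -Ea -Eb.
- by exists (x, y); rewrite //= !eqxx.
- by exists (y, x); rewrite //= !eqxx orbT.
Qed.

Lemma cycle_pairs e s : cycle e s = all [pred q | e q.1 q.2] (cyc_pairs s).
Proof.
case: s => [//|x p]; rewrite /cyc_pairs rot1_cons /=.
elim: p {1 3}x => [|z p IHp] y /=; first by rewrite andbT.
by rewrite IHp.
Qed.

Lemma nth_rot1 x0 s i :
  i < size s -> nth x0 (rot 1 s) i = nth x0 s ((i + 1) %% size s).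
Proof.
case: s => [//|x p] /= Hi; rewrite rot1_cons nth_rcons addn1.
case: (ltnP i (size p)) => Hip; first by rewrite modn_small.
have -> : i = size p by lia.
by rewrite eqxx modnn.
Qed.

Lemma cyc_pairs_nth x0 s i :
  i < size s -> (nth x0 s i, nth x0 s ((i + 1) %% size s)) \in cyc_pairs s.
Proof.
move=> Hi; rewrite -nth_rot1 // -nth_zip ?size_rot //.
by apply: mem_nth; rewrite size_zip size_rot minnn.
Qed.

Lemma cadj_cyc_edge x0 s i j : i < size s -> j < size s ->
  cadj (size s) i j -> cyc_edge s (nth x0 s i) (nth x0 s j).
Proof.
move=> Hi Hj /orP[] /eqP <-; apply/cyc_edgeP.
- by left; apply: cyc_pairs_nth.
- by right; apply: cyc_pairs_nth.
Qed.

Lemma cyc_edge_rel e s x y : cycle e s -> cyc_edge s x y -> e x y || e y x.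
Proof.
rewrite cycle_pairs => /allP He /cyc_edgeP[] /He /= ->; by rewrite ?orbT.
Qed.

Lemma cyc_edge_irr e s : irreflexive e -> cycle e s -> irreflexive (cyc_edge s).
Proof.
move=> e_irr Hs x; apply/negP => /(cyc_edge_rel Hs).
by rewrite orbb e_irr.
Qed.

End CyclicPairs.

Lemma cyc_pairs_map (T U : eqType) (f : T -> U) (s : seq T) :
  cyc_pairs (map f s) = [seq (f q.1, f q.2) | q <- cyc_pairs s].
Proof.
rewrite /cyc_pairs -map_rot.
by elim: s (rot 1 s) => [|x s IHs] [|y t] //=; rewrite IHs.
Qed.

Lemma cyc_edge_map (T U : eqType) (f : T -> U) (s : seq T) x y :
  cyc_edge (map f s) x y -> exists a b, [/\ cyc_edge s a b, x = f a & y = f b].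
Proof.
case/cyc_edgeP; rewrite cyc_pairs_map => /mapP[[a b] Hab []] -> ->.
- by exists a, b; split=> //; apply/cyc_edgeP; left.
- by exists b, a; split=> //; apply/cyc_edgeP; right.
Qed.

Lemma edge_disjoint_map_inj (T U : eqType) (f : T -> U) (s t : seq T) :
  injective f -> edge_disjoint s t -> edge_disjoint (map f s) (map f t).
Proof.
move=> f_inj Hst x y /cyc_edge_map[a [b [Hab -> ->]]].
apply/negP => /cyc_edge_map[c [d [Hcd /f_inj Eac /f_inj Ebd]]].
by move: Hcd; rewrite -Eac -Ebd; apply/negP/Hst.
Qed.

Lemma edge_disjoint_map_sep (T T' U : eqType) (f : T -> U) (g : T' -> U)
    (P Q : rel U) (s : seq T) (t : seq T') :
  (forall a b, cyc_edge s a b -> P (f a) (f b)) ->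
  (forall c d, cyc_edge t c d -> Q (g c) (g d)) ->
  (forall x y, P x y -> ~~ Q x y) ->
  edge_disjoint (map f s) (map g t).
Proof.
move=> HP HQ HPQ x y /cyc_edge_map[a [b [/HP Pab -> ->]]].
apply/negP => /cyc_edge_map[c [d [/HQ + Ec Ed]]].
by rewrite -Ec -Ed; apply/negP/HPQ.
Qed.

Section ProductEdges.
Variable T : eqType.

Definition prod_edge (R : rel T) : rel (T * T) :=
  fun p q => ((p.1 == q.1) && R p.2 q.2) || ((p.2 == q.2) && R p.1 q.1).

(* Product edges of edge-disjoint graphs are disjoint, provided one of them is
   loopless (an edge in one coordinate would be a loop in the other). *)
Lemma prod_edge_disjoint (R1 R2 : rel T) p q :
  irreflexive R2 -> (forall x y, R1 x y -> ~~ R2 x y) ->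
  prod_edge R1 p q -> ~~ prod_edge R2 p q.
Proof.
move=> R2_irr R12 /orP[] /andP[/eqP E R1pq]; apply/negP.
- case/orP => /andP[/eqP E' R2pq]; first by move: R2pq; apply/negP/R12.
  by move: R2pq; rewrite E R2_irr.
- case/orP => /andP[/eqP E' R2pq]; last by move: R2pq; apply/negP/R12.
  by move: R2pq; rewrite E R2_irr.
Qed.

End ProductEdges.

Lemma cadj_irr m x : 1 < m -> ~~ cadj m x x.
Proof.
move=> Hm; rewrite /cadj orbb; apply/eqP => Hx.
have x_lt_m : x < m by rewrite -Hx ltn_pmod // ltnW.
case: (ltnP (x + 1) m) => Hxm; first by move: Hx; rewrite modn_small //; lia.
have Em : m = x + 1 by lia.
by move: Hx; rewrite Em modnn; lia.
Qed.

Lemma qadj_irr n : irreflexive (@qadj n).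
Proof. by move=> u; apply/existsP => -[i /andP[_]]; apply/negP/cadj_irr. Qed.

Lemma gadj_sym n : symmetric (@gadj n).
Proof.
move=> a b; rewrite /gadj /cadj (eq_sym a.1) (eq_sym a.2).
by rewrite (orbC ((_ + 1) %% _ == b.2)) (orbC ((_ + 1) %% _ == b.1)).
Qed.

Lemma ham_cycle_size (T : finType) (adj : rel T) (s : seq T) :
  ham_cycle adj s -> size s = #|T|.
Proof.
case=> s_all s_uniq _; rewrite -(card_uniqP s_uniq).
by apply: eq_card => v; rewrite s_all inE.
Qed.

Lemma size_qham n (E : seq (qvert n)) : ham_cycle (@qadj n) E -> size E = 4 ^ n.
Proof. by move/ham_cycle_size ->; rewrite card_ffun !card_ord. Qed.

Lemma PhiE_inv_inj n (E : seq (qvert n)) :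
  size E = 4 ^ n -> uniq E -> injective (PhiE_inv E).
Proof.
move=> E_size E_uniq [a1 a2] [c1 c2] [/eqP e1 /eqP e2].
rewrite !nth_uniq ?E_size ?ltn_ord // in e1 e2.
by congr pair; apply/val_inj/eqP.
Qed.

Lemma PhiE_inv_gadj n (E : seq (qvert n)) (a b : gvert n) :
  size E = 4 ^ n -> gadj a b ->
  prod_edge (cyc_edge E) (PhiE_inv E a) (PhiE_inv E b).
Proof.
rewrite /prod_edge /PhiE_inv /= => E_size.
case/orP => /andP[/eqP -> ab_adj]; apply/orP; [left | right];
  rewrite eqxx /=; apply: cadj_cyc_edge; by rewrite ?E_size ?ltn_ord.
Qed.

Lemma fEH_same_E n (E : seq (qvert n)) (H H' : seq (gvert n)) :
  dir_ham_cycle0 E -> edge_disjoint H H' -> edge_disjoint (fEH E H) (fEH E H').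
Proof.
move=> [E_ham _]; apply: edge_disjoint_map_inj.
by apply: PhiE_inv_inj; [apply: size_qham | case: E_ham].
Qed.

Lemma fEH_edge n (E : seq (qvert n)) (H : seq (gvert n)) a b :
  ham_cycle (@qadj n) E -> ham_cycle (@gadj n) H -> cyc_edge H a b ->
  prod_edge (cyc_edge E) (PhiE_inv E a) (PhiE_inv E b).
Proof.
move=> E_ham [_ _ H_cyc] /(cyc_edge_rel H_cyc); rewrite [gadj b a]gadj_sym orbb.
by apply: PhiE_inv_gadj; apply: size_qham.
Qed.

Lemma fEH_diff_E n (E1 E2 : seq (qvert n)) (H H' : seq (gvert n)) :
  ham_cycle (@gadj n) H -> ham_cycle (@gadj n) H' ->
  dir_ham_cycle0 E1 -> dir_ham_cycle0 E2 -> edge_disjoint E1 E2 ->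
  edge_disjoint (fEH E1 H) (fEH E2 H').
Proof.
move=> H_ham H'_ham [E1_ham _] [E2_ham _] E12.
apply: (edge_disjoint_map_sep (P := prod_edge (cyc_edge E1))
                             (Q := prod_edge (cyc_edge E2))).
- by move=> a b; apply: fEH_edge.
- by move=> c d; apply: fEH_edge.
- move=> x y; apply: prod_edge_disjoint => //.
  by case: E2_ham => _ _; apply: cyc_edge_irr (@qadj_irr n).
Qed.

Theorem lemma1 (n : nat) (H1 H2 : seq (gvert n)) (E1 E2 : seq (qvert n)) :
  1 <= n ->
  ham_cycle (@gadj n) H1 -> ham_cycle (@gadj n) H2 -> edge_disjoint H1 H2 ->
  dir_ham_cycle0 E1 -> dir_ham_cycle0 E2 -> edge_disjoint E1 E2 ->
  edge_disjoint (fEH E1 H1) (fEH E1 H2) /\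
  edge_disjoint (fEH E1 H1) (fEH E2 H1) /\
  edge_disjoint (fEH E1 H1) (fEH E2 H2) /\
  edge_disjoint (fEH E1 H2) (fEH E2 H1) /\
  edge_disjoint (fEH E1 H2) (fEH E2 H2) /\
  edge_disjoint (fEH E2 H1) (fEH E2 H2).
Proof.
move=> _ H1_ham H2_ham H12 E1_ham E2_ham E12.
split; first exact: fEH_same_E.
split; first exact: fEH_diff_E.
split; first exact: fEH_diff_E.
split; first exact: fEH_diff_E.
split; first exact: fEH_diff_E.
exact: fEH_same_E.
Qed.
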